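(* Let $V$ be a finite dimensional vector space over $\mathbb{R}$. A finite subset $A$ of $V$ generates a dense subsemigroup of the additive group $V$ if and only if the following two conditions hold: (a) the convex hull of $A$ contains $0$ in its interior; (b) the zero form is the only $\mathbb{R}$-linear form $l$ on $V$ with $l(A)\subset\mathbb{Z}$. *)

From HB Require Import structures.
From mathcomp Require Import all_boot all_order all_algebra.
From mathcomp Require Import all_classical all_reals all_analysis.
Set Implicit Arguments. Unset Strict Implicit. Unset Printing Implicit Defensive.
Import Order.TTheory GRing.Theory Num.Theory.
Import numFieldNormedType.Exports.
Local Open Scope classical_set_scope.
Local Open Scope ring_scope.

(* V = 'rV[R]_n, R : realType, with the product (matrix) topology. *)

Inductive gen_semigroup (R : realType) (n : nat) (A : seq 'rV[R]_n)
  : 'rV[R]_n -> Prop :=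
| gen_sg_base x : x \in A -> gen_semigroup A x
| gen_sg_add x y : gen_semigroup A x -> gen_semigroup A y ->
    gen_semigroup A (x + y).

Definition conv_hull (R : realType) (n : nat) (A : seq 'rV[R]_n) : set 'rV[R]_n :=
  [set x | exists w : 'I_(size A) -> R,
     (forall i, 0 <= w i) /\ \sum_(i < size A) w i = 1 /\
     x = \sum_(i < size A) w i *: A`_i].

Definition linear_form (R : realType) (n : nat) (l : 'rV[R]_n -> R) : Prop :=
  (forall x y, l (x + y) = l x + l y) /\ (forall (a : R) x, l (a *: x) = a * l x).

From HB Require Import structures.
From mathcomp Require Import all_boot all_order all_algebra.
From mathcomp Require Import all_classical all_reals all_analysis.
From mathcomp Require Import ring lra.
Import Order.TTheory GRing.Theory Num.Theory.
Import numFieldNormedType.Exports.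
Local Open Scope classical_set_scope.
Local Open Scope ring_scope.
Set Implicit Arguments. Unset Strict Implicit. Unset Printing Implicit Defensive.

(* Let S be the semigroup generated by A and P the matrix whose rows are the
   elements of A.
   If S is dense, a linear form with integral values on A is integral on the
   dense set S, hence vanishes. Elements of S close to the unit vectors and to
   -(1, ..., 1) show that the cone spanned by A is the whole space, and a cone
   equal to the whole space has 0 in the interior of the convex hull.
   Conversely, 0 in the interior gives a relation c P = 0 with c > 0, and (b)
   makes the group generated by A dense (Kronecker, via Dirichlet's
   simultaneous approximation). Approximate x by an integral combination z P,
   then add an integral relation q P which is tiny, by Dirichlet applied to a
   large multiple of c, but whose coefficients dominate those of -z: the result
   lies in S. *)

Section RowNorms.
Variable R : realType.

Lemma norm_coord_le n (x : 'rV[R]_n) j : `|x 0 j| <= `|x|.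
Proof.
have -> : `|x| = mx_norm x by [].
by rewrite mx_normrE; exact: (le_bigmax _ _ (0, j)).
Qed.

Lemma norm_le_coord n (x : 'rV[R]_n) b :
  0 <= b -> (forall j, `|x 0 j| <= b) -> `|x| <= b.
Proof.
move=> b0 xb; have -> : `|x| = mx_norm x by [].
by rewrite mx_normrE; apply: bigmax_le => // -[i j] _ /=; rewrite (ord1 i).
Qed.

Lemma sum_norm_coord_le p (v : 'rV[R]_p) : \sum_i `|v 0 i| <= p%:R * `|v|.
Proof.
apply: (@le_trans _ _ (\sum_(i < p) `|v|)); last by rewrite sumr_const card_ord mulr_natl.
by apply: ler_sum => i _; exact: norm_coord_le.
Qed.

Lemma norm_mulmx_le p n (v : 'rV[R]_p) (G : 'M[R]_(p, n)) b :
  (forall i, `|row i G| <= b) -> `|v *m G| <= (\sum_i `|v 0 i|) * b.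
Proof.
move=> Gb; rewrite mulmx_sum_row big_distrl /=.
apply: (le_trans (ler_norm_sum _ _ _)); apply: ler_sum => i _.
by rewrite normrZ; apply: ler_wpM2l.
Qed.

Lemma row_norm_bound p n (G : 'M[R]_(p, n)) :
  exists2 b, 0 < b & forall i, `|row i G| <= b.
Proof.
exists (\sum_i `|row i G| + 1) => [|i]; first by rewrite ltr_wpDl // sumr_ge0.
by rewrite (bigD1 i) //= -addrA lerDl addr_ge0 // sumr_ge0.
Qed.

Lemma dense_normP n (S : set 'rV[R]_n) :
  dense S <-> forall x e, 0 < e -> exists2 s, S s & `|x - s| < e.
Proof.
split=> [Sd x e e0 | Sclose O [x Ox] oO].
  have [|s [xs Ss]] := Sd (ball x e) _ (ball_open x e); first by exists x; exact: ballxx.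
  by exists s => //; move: xs; rewrite -ball_normE.
have /nbhs_ballP [e e0 xeO] : nbhs x O by move: oO; rewrite openE; exact.
have [s Ss xs] := Sclose x e e0.
by exists s; split => //; apply: xeO; rewrite -ball_normE.
Qed.

End RowNorms.

Section Dirichlet.
Variable R : realType.

Lemma floor_scale_lt N (f : R) : 0 <= f -> f < 1 ->
  (`|Num.floor (N.+1%:R * f)|%N < N.+1)%N.
Proof.
move=> f0 f1.
have z0 : 0 <= Num.floor (N.+1%:R * f) by rewrite floor_ge0 mulr_ge0.
rewrite -ltz_nat gez0_abs // floor_lt_int.
have -> : (N.+1 : int)%:~R = N.+1%:R :> R by [].
by rewrite -[X in _ < X]mulr1 ltr_pM2l.
Qed.

Lemma floor_scale_close N (f1 f2 : R) : 0 <= f1 -> 0 <= f2 ->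
  `|Num.floor (N.+1%:R * f1)|%N = `|Num.floor (N.+1%:R * f2)|%N ->
  `|f1 - f2| < N.+1%:R^-1.
Proof.
move=> f10 f20 fl12.
have z10 : 0 <= Num.floor (N.+1%:R * f1) by rewrite floor_ge0 mulr_ge0.
have z20 : 0 <= Num.floor (N.+1%:R * f2) by rewrite floor_ge0 mulr_ge0.
have E : Num.floor (N.+1%:R * f1) = Num.floor (N.+1%:R * f2).
  by rewrite -(gez0_abs z10) -(gez0_abs z20) fl12.
have a1 := floor_le (N.+1%:R * f1); have b1 := floorD1_gt (N.+1%:R * f1).
have a2 := floor_le (N.+1%:R * f2); have b2 := floorD1_gt (N.+1%:R * f2).
rewrite E intrD in a1 b1; rewrite intrD in b2.
set Z := ((Num.floor _)%:~R) in a1 b1 a2 b2.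
have N0 : 0 < N.+1%:R :> R by rewrite ltr0n.
have : `|N.+1%:R * f1 - N.+1%:R * f2| < 1 by rewrite ltr_norml; apply/andP; split; lra.
rewrite -mulrBr normrM (gtr0_norm N0) => close.
by rewrite -(ltr_pM2l N0) mulfV ?gt_eqF.
Qed.

(* Pigeonhole on the fractional parts of k u, 0 <= k <= N.+1 ^ p, sorted into
   N.+1 ^ p boxes of side N.+1^-1. *)
Lemma dirichlet_approx p N (u : 'rV[R]_p) :
  exists2 d : nat, (0 < d)%N & exists2 q : 'rV[R]_p,
    (forall i, q 0 i \is a Num.int) & forall i, `|d%:R * u 0 i - q 0 i| < N.+1%:R^-1.
Proof.
pose fr (x : R) := x - (Num.floor x)%:~R.
have fr0 x : 0 <= fr x by rewrite /fr subr_ge0 floor_le.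
have fr1 x : fr x < 1 by have := floorD1_gt x; rewrite intrD /fr => ?; lra.
pose box (k : 'I_(N.+1 ^ p).+1) : {ffun 'I_p -> 'I_N.+1} :=
  [ffun i => inord (absz (Num.floor (N.+1%:R * fr (k%:R * u 0 i))))].
have same_box (k1 k2 : 'I_(N.+1 ^ p).+1) : (k1 < k2)%N -> box k1 = box k2 ->
    exists2 d : nat, (0 < d)%N & exists2 q : 'rV[R]_p,
      (forall i, q 0 i \is a Num.int) & forall i, `|d%:R * u 0 i - q 0 i| < N.+1%:R^-1.
  move=> lt12 box12; exists (k2 - k1)%N; first by rewrite subn_gt0.
  exists (\row_i (Num.floor (k2%:R * u 0 i) - Num.floor (k1%:R * u 0 i))%:~R).
    by move=> i; rewrite mxE intr_int.
  move=> i; rewrite mxE.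
  have := congr1 (fun f : {ffun _ -> _} => val (f i)) box12.
  rewrite /= !ffunE /= !inordK ?floor_scale_lt // => /floor_scale_close.
  move=> /(_ (fr0 _) (fr0 _)); rewrite distrC /fr natrB ?(ltnW lt12) // intrB.
  by congr (`|_| < _); ring.
have [k1 [k2 [box12 k12]]] : exists k1 k2, box k1 = box k2 /\ k1 <> k2.
  apply: contrapT => noncoll; suff /leq_card : injective box.
    by rewrite card_ffun !card_ord ltnn.
  move=> k1 k2 box12; apply: contrapT => k12; apply: noncoll; by exists k1, k2.
case: (ltngtP k1 k2) => [lt12|lt21|eq12]; first exact: same_box box12.
  exact: same_box (esym box12).
by case: k12; apply: val_inj.
Qed.

Lemma dirichlet_small_comb p n (u : 'rV[R]_p) (G : 'M[R]_(p, n)) e : 0 < e ->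
  exists2 d : nat, (0 < d)%N & exists2 q : 'rV[R]_p,
    (forall i, q 0 i \is a Num.int) &
    (forall i, `|d%:R * u 0 i - q 0 i| < 1) /\ `|(d%:R *: u - q) *m G| < e.
Proof.
move=> e0; have [b b0 Gb] := row_norm_bound G.
pose N := Num.truncn (p%:R * b / e).
have HN : p%:R * b / e < N.+1%:R := truncnS_gt _.
have N0 : 0 < N.+1%:R :> R by rewrite ltr0n.
have Ninv1 : N.+1%:R^-1 <= 1 :> R by rewrite invr_le1 ?ler1n // unitfE gt_eqF.
have [d d0 [q qint dq]] := dirichlet_approx N u.
exists d => //; exists q => //; split=> [i|]; first exact: lt_le_trans (dq i) Ninv1.
apply: le_lt_trans (norm_mulmx_le _ Gb) _.
apply: (@le_lt_trans _ _ (p%:R * N.+1%:R^-1 * b)).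
  apply: ler_wpM2r; first exact: ltW.
  apply: (@le_trans _ _ (\sum_(j < p) N.+1%:R^-1)); last by rewrite sumr_const card_ord mulr_natl.
  by apply: ler_sum => j _; rewrite !mxE; apply: ltW.
move: HN; rewrite ltr_pdivrMr // => HN.
by rewrite mulrAC ltr_pdivrMr // [_ * N.+1%:R]mulrC.
Qed.

End Dirichlet.

Section RowSpaces.
Variable R : fieldType.

Lemma mxrank_adds_notin m n (X : 'M[R]_(m, n)) (x : 'rV[R]_n) :
  ~~ (x <= X)%MS -> \rank (X + x)%MS = (\rank X).+1.
Proof.
move=> xX; apply/eqP; rewrite eqn_leq; apply/andP; split.
  apply: (leq_trans (mxrank_adds_leqif X x)).
  by rewrite -[X in (_ <= X)%N]addn1 leq_add2l rank_leq_row.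
have : (X < X + x)%MS.
  rewrite ltmxE addsmxSl /=; apply: contra xX; exact: submx_trans (addsmxSr X x).
by rewrite ltmxErank => /andP[].
Qed.

Lemma row_col_mx_forall T m k n (Q : 'rV[T]_n -> Prop)
    (X : 'M[T]_(m, n)) (E : 'M[T]_(k, n)) :
  (forall i, Q (row i X)) -> (forall i, Q (row i E)) ->
  forall i, Q (row i (col_mx X E)).
Proof.
move=> QX QE i; case: (splitP i) => j ij.
  have -> : i = lshift k j by apply: val_inj.
  by rewrite rowKu.
have -> : i = rshift m j by apply: val_inj.
by rewrite rowKd.
Qed.

Lemma row_free_extend m n (Q : set 'rV[R]_n) (G : 'M[R]_(m, n)) :
  row_free G -> exists k (E : 'M[R]_(k, n)), (forall i, Q (row i E)) /\
    row_free (col_mx G E) /\ forall x, Q x -> (x <= col_mx G E)%MS.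
Proof.
move=> freeG.
pose ext k := `[< exists E : 'M[R]_(k, n), (forall i, Q (row i E)) /\ row_free (col_mx G E) >].
have ext0 : exists k, ext k.
  exists 0%N; apply/asboolP; exists 0; split=> [[]//|].
  by rewrite /row_free -addsmxE addsmx0 addn0.
have ext_le k : ext k -> (k <= n)%N.
  move=> /asboolP [E [_ /eqP freeGE]].
  by have := rank_leq_col (col_mx G E); rewrite freeGE; apply: leq_trans; exact: leq_addl.
case: (ex_maxnP ext0 ext_le) => k /asboolP [E [QE freeGE]] kmax.
exists k, E; split=> //; split=> // x Qx; apply: contraT => xGE.
suff /kmax : ext k.+1 by rewrite ltnn.
apply/asboolP; exists (col_mx x E); split.
  by apply: (@row_col_mx_forall _ 1 k n Q) => // i; rewrite (ord1 i) row_id.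
move: freeGE; rewrite /row_free -!addsmxE => /eqP freeGE.
rewrite (adds_eqmx (eqmx_refl G) (eqmx_sym (addsmxE x E))).
rewrite addsmxA (addsmxC G x) -addsmxA addsmxC mxrank_adds_notin ?freeGE ?addnS //.
by rewrite addsmxE.
Qed.

Lemma row_free_maximal n (Q : set 'rV[R]_n) :
  exists k (E : 'M[R]_(k, n)), (forall i, Q (row i E)) /\
    row_free E /\ forall x, Q x -> (x <= E)%MS.
Proof.
have free0 : row_free (0 : 'M[R]_(0, n)) by rewrite /row_free mxrank0.
have [k [E [QE [freeE QsubE]]]] := row_free_extend Q free0.
have col0E : (col_mx (0 : 'M[R]_(0, n)) E :=: E)%MS := eqmx_trans (eqmx_sym (addsmxE _ _)) (adds0mx _ _).
exists k, E; split=> //; split=> [|x /QsubE]; last by rewrite col0E.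
by move: freeE; rewrite /row_free col0E.
Qed.

Lemma rank_lt_ker m n (B : 'M[R]_(m, n)) :
  (\rank B < n)%N -> exists2 y : 'cV[R]_n, y != 0 & B *m y = 0.
Proof.
move=> rB; pose K := kermx B^T.
have K0 : K != 0 by rewrite -mxrank_eq0 mxrank_ker mxrank_tr -lt0n subn_gt0.
have [i Ki] : exists i, row i K != 0.
  apply: contrapT => K0'; move/negP: K0; apply; apply/eqP/row_matrixP => i.
  by rewrite row0; apply/eqP; apply: contrapT => Ki; apply: K0'; exists i; exact/negP.
exists (row i K)^T; first by apply: contra Ki => /eqP K0'; rewrite -[row i K]trmxK K0' trmx0.
by rewrite -[B]trmxK -trmx_mul -row_mul mulmx_ker row0 trmx0.
Qed.

End RowSpaces.

Section IntegerSpan.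
Variable R : realType.

Definition int_span m n (P : 'M[R]_(m, n)) : set 'rV[R]_n :=
  [set x | exists2 z : 'rV[R]_m, (forall i, z 0 i \is a Num.int) & x = z *m P].

Variables (m n : nat) (P : 'M[R]_(m, n)).

Lemma int_span_row i : int_span P (row i P).
Proof. by exists 'e_i; [move=> j; rewrite mxE natr_int | exact: rowE]. Qed.

Lemma int_spanB x y : int_span P x -> int_span P y -> int_span P (x - y).
Proof.
move=> [zx zxint ->] [zy zyint ->]; exists (zx - zy); last by rewrite mulmxBl.
by move=> i; rewrite !mxE rpredB.
Qed.

Lemma int_spanMn (d : nat) x : int_span P x -> int_span P (d%:R *: x).
Proof.
move=> [z zint ->]; exists (d%:R *: z); last by rewrite scalemxAl.
by move=> i; rewrite !mxE rpredM // natr_int.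
Qed.

Lemma int_span_mulmx k (F : 'M[R]_(k, n)) (q : 'rV[R]_k) :
  (forall i, int_span P (row i F)) -> (forall i, q 0 i \is a Num.int) ->
  int_span P (q *m F).
Proof.
move=> /fin_all_exists2 [z zint Fz] qint.
have -> : F = (\matrix_i z i) *m P by apply/row_matrixP => i; rewrite row_mul rowK.
exists (q *m \matrix_i z i); last by rewrite mulmxA.
by move=> j; rewrite mxE rpred_sum // => i _; rewrite mxE rpredM.
Qed.

(* Rounding the coordinates of x in a basis of short lattice vectors. *)
Lemma int_span_dense_of_short_bases :
  (forall d, 0 < d -> exists k (F : 'M[R]_(k, n)),
     [/\ forall i, int_span P (row i F), forall i, `|row i F| < d,
         row_free F & row_full F]) ->
  dense (int_span P).
Proof.
move=> short; apply/dense_normP => x e e0.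
have n0 : 0 < n.+1%:R :> R by rewrite ltr0n.
have [k [F [intF shortF freeF fullF]]] := short (e / n.+1%:R) (divr_gt0 e0 n0).
have kn : (k <= n)%N by rewrite -(eqP freeF) rank_leq_col.
have /submxP [t ->] := submx_full x fullF.
pose z := \row_i (Num.floor (t 0 i))%:~R : 'rV[R]_k.
exists (z *m F); first by apply: int_span_mulmx => // i; rewrite mxE intr_int.
rewrite -mulmxBl; apply: le_lt_trans (norm_mulmx_le _ (fun i => ltW (shortF i))) _.
have roundoff : \sum_i `|(t - z) 0 i| <= k%:R.
  apply: (@le_trans _ _ (\sum_(i < k) (1 : R))); last by rewrite sumr_const card_ord.
  apply: ler_sum => i _; rewrite !mxE.
  have := floor_le (t 0 i); have := floorD1_gt (t 0 i); rewrite intrD.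
  by move=> ? ?; rewrite ger0_norm; lra.
have kn' : k%:R <= n%:R :> R by rewrite ler_nat.
apply: (@le_lt_trans _ _ (n%:R * (e / n.+1%:R))).
  by apply: ler_pM => //; [exact: sumr_ge0 | exact/ltW/divr_gt0 | exact: le_trans kn'].
by rewrite mulrCA gtr_pMr // ltr_pdivrMr // mul1r ltr_nat.
Qed.

(* Dirichlet's approximation d u ~ q of the coordinates of a lattice vector
   gives the short lattice vector (d u - q) B, whose E2-coordinates vanish. *)
Lemma int_span_coord_rational k1 k2 (E1 : 'M[R]_(k1, n)) (E2 : 'M[R]_(k2, n)) d0 :
  0 < d0 -> row_free (col_mx E1 E2) ->
  (forall i, int_span P (row i (col_mx E1 E2))) ->
  (forall x, int_span P x -> `|x| < d0 -> (x <= E1)%MS) ->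
  forall u, int_span P (u *m col_mx E1 E2) ->
  forall j, exists2 d : nat, (0 < d)%N & d%:R * u 0 (rshift k1 j) \is a Num.int.
Proof.
move=> d00 freeB intB shortE1 u intu j.
have [d d_gt0 [q qint [_ shortg]]] := dirichlet_small_comb u (col_mx E1 E2) d00.
exists d => //.
have intg : int_span P ((d%:R *: u - q) *m col_mx E1 E2).
  rewrite mulmxBl -scalemxAl.
  by apply: int_spanB; [exact: int_spanMn | exact: int_span_mulmx].
have /submxP [w gw] := shortE1 _ intg shortg.
have : (d%:R *: u - q) *m col_mx E1 E2 = row_mx w 0 *m col_mx E1 E2.
  by rewrite gw mul_row_col mul0mx addr0.
move/(row_free_inj freeB)/(congr1 (fun v : 'rV[R]_(k1 + k2) => v 0 (rshift k1 j))).
by rewrite row_mxEr !mxE => /eqP; rewrite subr_eq0 => /eqP ->.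
Qed.

Lemma int_dual_of_rational_coord k (B : 'M[R]_(k, n)) (U : 'M[R]_(m, k)) j :
  row_free B -> P = U *m B ->
  (forall i, exists2 d : nat, (0 < d)%N & d%:R * U i j \is a Num.int) ->
  exists2 y : 'cV[R]_n, y != 0 & forall i, (P *m y) i 0 \is a Num.int.
Proof.
move=> freeB PUB /fin_all_exists2 [d d0 dUint].
pose N := (\prod_i d i)%N.
have N0 : (0 < N)%N by apply: prodn_gt0.
have [Binv BBinv] := row_freeP freeB.
exists (Binv *m (N%:R *: delta_mx j 0)).
  apply: contraTneq N0 => /(congr1 (mulmx B)).
  rewrite mulmxA BBinv mul1mx mulmx0 => /(congr1 (fun v : 'cV_k => v j 0)).
  by rewrite !mxE !eqxx mulr1 => /eqP; rewrite pnatr_eq0 => /eqP ->.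
move=> i; rewrite PUB -mulmxA (mulmxA B) BBinv mul1mx -scalemxAr -colE !mxE.
by rewrite /N (bigD1 i) //= natrM mulrAC mulrC rpredM // natr_int.
Qed.

(* If the lattice is not dense, the lattice vectors shorter than some
   d0 span a proper subspace E1; completing E1 to a basis of the span of the
   lattice, the coordinates of the rows of P along a new basis vector are
   rational, which produces a nonzero integral dual vector. *)
Theorem int_span_dense :
  (forall y : 'cV[R]_n, (forall i, (P *m y) i 0 \is a Num.int) -> y = 0) ->
  dense (int_span P).
Proof.
move=> dual0; apply: int_span_dense_of_short_bases.
apply: contrapT => /existsNP [d0 /not_implyP [d00 nobasis]].
have [k1 [E1 [shortE1 [freeE1 spanE1]]]] :=
  row_free_maximal (fun x => int_span P x /\ `|x| < d0).
have notfullE1 : ~~ row_full E1.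
  apply/negP => fullE1; apply: nobasis; exists k1, E1.
  by split=> // i; case: (shortE1 i).
have [k2 [E2 [intE2 [freeB spanB]]]] := row_free_extend (int_span P) freeE1.
have intB := row_col_mx_forall (fun i => (shortE1 i).1) intE2.
have /submxP [U PUB] : (P <= col_mx E1 E2)%MS.
  by apply/row_subP => i; apply: spanB; exact: int_span_row.
case: (posnP k2) => [k20|k2pos].
  have rankB : (\rank (col_mx E1 E2) < n)%N.
    by rewrite (eqP freeB) k20 addn0 ltn_neqAle -(eqP freeE1) notfullE1 rank_leq_col.
  have [y y0 By0] := rank_lt_ker rankB; move/negP: y0; apply; apply/eqP/dual0 => i.
  by rewrite PUB -mulmxA By0 mulmx0 mxE rpred0.
have [y y0 inty] : exists2 y : 'cV[R]_n, y != 0 & forall i, (P *m y) i 0 \is a Num.int.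
  apply: (int_dual_of_rational_coord (j := rshift k1 (Ordinal k2pos)) freeB PUB) => i.
  have intu : int_span P (row i U *m col_mx E1 E2).
    by rewrite -row_mul -PUB; exact: int_span_row.
  have shortE1sub x : int_span P x -> `|x| < d0 -> (x <= E1)%MS.
    by move=> intx shortx; apply: spanE1.
  have [d d_gt0] := int_span_coord_rational d00 freeB intB shortE1sub intu (Ordinal k2pos).
  by rewrite mxE; exists d.
by move/negP: y0; apply; apply/eqP/dual0.
Qed.

End IntegerSpan.

Section Cones.
Variable R : realType.

Definition nneg_span m n (P : 'M[R]_(m, n)) : set 'rV[R]_n :=
  [set x | exists2 c : 'rV[R]_m, (forall i, 0 <= c 0 i) & x = c *m P].

Variables (m n : nat) (P : 'M[R]_(m, n)).

Lemma nneg_spanD x y : nneg_span P x -> nneg_span P y -> nneg_span P (x + y).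
Proof.
move=> [cx cx0 ->] [cy cy0 ->]; exists (cx + cy); last by rewrite mulmxDl.
by move=> i; rewrite mxE addr_ge0.
Qed.

Lemma nneg_spanZ a x : 0 <= a -> nneg_span P x -> nneg_span P (a *: x).
Proof.
move=> a0 [c c0 ->]; exists (a *: c); last by rewrite scalemxAl.
by move=> i; rewrite mxE mulr_ge0.
Qed.

Lemma nneg_span_mulmx k (F : 'M[R]_(k, n)) (c : 'rV[R]_k) :
  (forall i, nneg_span P (row i F)) -> (forall i, 0 <= c 0 i) ->
  nneg_span P (c *m F).
Proof.
move=> /fin_all_exists2 [K K0 FK] c0.
have -> : F = (\matrix_i K i) *m P by apply/row_matrixP => i; rewrite row_mul rowK.
exists (c *m \matrix_i K i); last by rewrite mulmxA.
by move=> j; rewrite mxE sumr_ge0 // => i _; rewrite mxE mulr_ge0.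
Qed.

(* x = c M is rewritten as (c + t c0) M + t s, where t is large enough for
   c + t c0 to be nonnegative. *)
Lemma nneg_span_full_of_unitmx (M : 'M[R]_n) (s c0 : 'rV[R]_n) :
  M \in unitmx -> (forall i, nneg_span P (row i M)) -> nneg_span P s ->
  (forall j, 0 < c0 0 j) -> c0 *m M = - s -> forall x, nneg_span P x.
Proof.
move=> Munit spanM spans c0pos c0M x.
pose c := x *m invmx M; pose t := \sum_j `|c 0 j| / c0 0 j.
have t0 : 0 <= t by apply: sumr_ge0 => j _; rewrite divr_ge0 // ltW.
have -> : x = (c + t *: c0) *m M + t *: s.
  by rewrite mulmxDl -scalemxAl c0M scalerN addrNK mulmxKV.
apply: nneg_spanD; last exact: nneg_spanZ.
apply: nneg_span_mulmx => // j.
have : `|c 0 j| / c0 0 j <= t.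
  by rewrite /t (bigD1 j) //= lerDl sumr_ge0 // => i _; rewrite divr_ge0 // ltW.
clearbody t c; rewrite !mxE ler_pdivrMr // ler_norml => /andP[ct _]; lra.
Qed.

End Cones.

Section NearIdentity.
Variable R : realType.

Lemma near_one_mulmx_le n (M : 'M[R]_n) eta (v : 'rV[R]_n) : 0 <= eta ->
  (forall i, `|row i M - row i 1%:M| <= eta) -> `|v *m M - v| <= n%:R * eta * `|v|.
Proof.
move=> eta0 Meta; have -> : v *m M - v = v *m (M - 1%:M) by rewrite mulmxBr mulmx1.
apply: le_trans (norm_mulmx_le (b := eta) _ _) _.
  by move=> i; rewrite rowE mulmxBr -!rowE.
by rewrite mulrAC ler_wpM2r // sum_norm_coord_le.
Qed.

(* As (n + 1) eta = 1/4, |c M - c| <= |c| / 4: hence M is invertible and the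
   solution c of c M = s stays within 2/3 of the all-ones vector. *)
Lemma near_one_pos_solution n (M : 'M[R]_n) (s : 'rV[R]_n) :
  (forall i, `|row i M - row i 1%:M| <= (4 * n.+1%:R)^-1) ->
  `|s - const_mx 1| <= (4 * n.+1%:R)^-1 ->
  M \in unitmx /\ exists2 c : 'rV[R]_n, (forall j, 0 < c 0 j) & c *m M = s.
Proof.
set eta := (4 * n.+1%:R)^-1 => Meta seta.
have eta0 : 0 < eta by rewrite invr_gt0 mulr_gt0 // ltr0n.
have etaN : n%:R * eta + eta = 4^-1.
  have n0 : n.+1%:R != 0 :> R by rewrite pnatr_eq0.
  by rewrite -[X in _ + X]mul1r -mulrDl natr1 /eta invfM mulrCA mulfV ?mulr1.
have neta0 : 0 <= n%:R * eta by rewrite mulr_ge0 // ltW.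
have near (v : 'rV[R]_n) : `|v *m M - v| <= 4^-1 * `|v|.
  apply: le_trans (near_one_mulmx_le v (ltW eta0) Meta) _.
  by apply: ler_wpM2r => //; lra.
have Munit : M \in unitmx.
  rewrite -row_free_unit; apply/inj_row_free => v vM0; apply/eqP; rewrite -normr_le0.
  by have := near v; rewrite vM0 sub0r normrN; have := normr_ge0 v; lra.
split=> //; exists (s *m invmx M); last by rewrite mulmxKV.
have cM : (s *m invmx M) *m M = s by rewrite mulmxKV.
set c := s *m invmx M in cM *; clearbody c => j.
have norm1 : `|const_mx 1 : 'rV[R]_n| <= 1.
  by apply: norm_le_coord => // i; rewrite mxE normr1.
set t := `|c - const_mx 1|.
have tc : `|c| <= 1 + t.
  rewrite -{1}[c](subrK (const_mx 1)) addrC.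
  exact: le_trans (ler_normD _ _) (lerD norm1 (lexx _)).
have t_le : t <= eta + 4^-1 * (1 + t).
  rewrite {1}/t; have -> : c - const_mx 1 = (s - const_mx 1) - (c *m M - c) by rewrite cM opprB [RHS]addrC addrA subrK.
  apply: le_trans (ler_normB _ _) _; apply: lerD => //.
  by apply: le_trans (near c) _; apply: ler_wpM2l.
have := norm_coord_le (c - const_mx 1) j; rewrite -/t !mxE ler_norml => /andP[lo _].
lra.
Qed.

End NearIdentity.

Section Semigroup.
Variables (R : realType) (n : nat) (A : seq 'rV[R]_n).

Definition gen_mx : 'M[R]_(size A, n) := \matrix_(i < size A) A`_i.

Lemma row_gen_mx i : row i gen_mx = A`_i.
Proof. by rewrite rowK. Qed.

Lemma gen_mx_index a (aA : a \in A) : row (Ordinal (etrans (index_mem a A) aA)) gen_mx = a.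
Proof. by rewrite row_gen_mx nth_index. Qed.

Lemma gen_semigroup_size_gt0 x : gen_semigroup A x -> (0 < size A)%N.
Proof. by elim=> // a; case: A. Qed.

Lemma gen_semigroup_nneg_span s : gen_semigroup A s -> nneg_span gen_mx s.
Proof.
elim=> [a aA|a b _ Sa _ Sb]; last exact: nneg_spanD.
exists 'e_(Ordinal (etrans (index_mem a A) aA)); first by move=> i; rewrite mxE ler0n.
by rewrite -rowE gen_mx_index.
Qed.

Lemma gen_semigroup_natmul a k : gen_semigroup A a -> gen_semigroup A (a *+ k.+1).
Proof.
move=> Sa; elim: k => [|k IH]; first by rewrite mulr1n.
by rewrite mulrS; apply: gen_sg_add.
Qed.

Lemma gen_semigroup_pos_int (k : 'rV[R]_(size A)) : (0 < size A)%N ->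
  (forall i, k 0 i \is a Num.int) -> (forall i, 0 < k 0 i) ->
  gen_semigroup A (k *m gen_mx).
Proof.
move=> A0 kint kpos.
have term i : gen_semigroup A (k 0 i *: row i gen_mx).
  have /natrP [[|c] kc] : k 0 i \is a Num.nat by rewrite natrEint kint ltW.
    by have := kpos i; rewrite kc ltxx.
  by rewrite kc scaler_nat row_gen_mx; apply/gen_semigroup_natmul/gen_sg_base/mem_nth.
rewrite mulmx_sum_row (bigD1 (Ordinal A0)) //=.
pose S0 v := v = 0 \/ gen_semigroup A v.
have : S0 (\sum_(i | i != Ordinal A0) k 0 i *: row i gen_mx).
  apply: big_ind => [|x y [->|Sx] [->|Sy]|i _]; rewrite ?addr0 ?add0r; try by [left|right].
  by right; apply: gen_sg_add.
by case=> [->|S]; [rewrite addr0 | apply: gen_sg_add].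
Qed.

Lemma conv_hullP y : conv_hull A y <->
  exists2 w : 'rV[R]_(size A), (forall i, 0 <= w 0 i) & \sum_i w 0 i = 1 /\ y = w *m gen_mx.
Proof.
split=> [[w [w0 [w1 ->]]]|[w w0 [w1 ->]]].
  exists (\row_i w i) => [i|]; first by rewrite mxE.
  split; first by under eq_bigr do rewrite mxE.
  by rewrite mulmx_sum_row; apply: eq_bigr => i _; rewrite mxE row_gen_mx.
exists (fun i => w 0 i); split=> //; split=> //.
by rewrite mulmx_sum_row; apply: eq_bigr => i _; rewrite row_gen_mx.
Qed.

End Semigroup.

Lemma int_relation_large (R : realType) m n (P : 'M[R]_(m, n)) (c : 'rV[R]_m) L e :
  (forall i, 0 < c 0 i) -> c *m P = 0 -> 0 < e ->
  exists2 q : 'rV[R]_m, (forall i, q 0 i \is a Num.int /\ L < q 0 i) & `|q *m P| < e.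
Proof.
move=> cpos cP e0.
pose u := ((`|L| + 1) * \sum_i (c 0 i)^-1) *: c.
have uL i : `|L| + 1 <= u 0 i.
  rewrite mxE -mulrA -[X in X <= _]mulr1 ler_wpM2l ?addr_ge0 //.
  rewrite (bigD1 i) //= mulrDl mulVf ?gt_eqF // lerDl mulr_ge0 ?(ltW (cpos i)) //.
  by apply: sumr_ge0 => j _; rewrite invr_ge0 ltW.
have [d d_gt0 [q qint [dq small]]] := dirichlet_small_comb u P e0.
exists q => [i|].
  split=> //; have := dq i; rewrite ltr_norml => /andP[_ dq1].
  have : u 0 i <= d%:R * u 0 i by rewrite ler_peMl ?ler1n // (le_trans _ (uL i)) // addr_ge0.
  have := uL i; have := ler_norm L; lra.
have -> : q *m P = - ((d%:R *: u - q) *m P).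
  by rewrite mulmxBl opprB -!scalemxAl cP !scaler0 subr0.
by rewrite normrN.
Qed.

Section Sufficiency.
Variables (R : realType) (n : nat) (A : seq 'rV[R]_n).

Lemma conv_hull_size_gt0 y : conv_hull A y -> (0 < size A)%N.
Proof.
case/conv_hullP => w _ [w1 _]; rewrite lt0n; apply/eqP => A0.
have noidx (i : 'I_(size A)) : False by case: i; rewrite A0.
by move: w1; rewrite big1 => [/esym/eqP|i]; rewrite ?oner_eq0 //; case: (noidx i).
Qed.

(* Each small vector -rho_i A_i is a convex combination f_i of A; then
   sum_i (f_i + rho_i e_i) is a positive relation. *)
Lemma interior_conv_hull_pos_relation :
  nbhs (0 : 'rV[R]_n) (conv_hull A) ->
  exists2 c : 'rV[R]_(size A), (forall i, 0 < c 0 i) & c *m gen_mx A = 0.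
Proof.
move=> /nbhs_ballP [r r0 ballr].
have hull y : `|y| < r -> conv_hull A y.
  by move=> yr; apply: ballr; rewrite -ball_normE /ball_ /= sub0r normrN.
pose rho (i : 'I_(size A)) := r / (2 * (`|A`_i| + 1)).
have rho0 i : 0 < rho i by rewrite divr_gt0 // mulr_gt0 // ltr_wpDl.
have neg i : exists2 w : 'rV[R]_(size A), (forall j, 0 <= w 0 j) &
    - (rho i *: A`_i) = w *m gen_mx A.
  have : `|- (rho i *: A`_i)| < r.
    rewrite normrN normrZ gtr0_norm // /rho mulrAC ltr_pdivrMr ?mulr_gt0 ?ltr_wpDl //.
    by rewrite ltr_pM2l //; have := normr_ge0 A`_i; lra.
  by move/hull/conv_hullP => [w w0 [_ ->]]; exists w.
have [f f0 fA] := fin_all_exists2 neg.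
exists (\sum_i (f i + rho i *: 'e_i)) => [j|].
  rewrite summxE (bigD1 j) //= !mxE !eqxx /= mulr1.
  apply: ltr_wpDr; last by rewrite ltr_wpDl // f0.
  by apply: sumr_ge0 => i _; rewrite !mxE addr_ge0 ?f0 // mulr_ge0 // ltW.
rewrite mulmx_suml big1 // => i _.
by rewrite mulmxDl -fA -scalemxAl -rowE row_gen_mx addNr.
Qed.

Lemma gen_semigroup_dense (c : 'rV[R]_(size A)) : (0 < size A)%N ->
  (forall i, 0 < c 0 i) -> c *m gen_mx A = 0 -> dense (int_span (gen_mx A)) ->
  dense (gen_semigroup A).
Proof.
move=> A0 cpos cP /dense_normP approx; apply/dense_normP => x e e0.
have e20 : 0 < e / 2 by rewrite divr_gt0.
have [_ [z zint ->] xz] := approx x _ e20.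
have [q qlarge small] := int_relation_large (\sum_i `|z 0 i|) cpos cP e20.
exists ((z + q) *m gen_mx A).
  apply: gen_semigroup_pos_int => // i; rewrite mxE; first by rewrite rpredD // (qlarge i).1.
  have : `|z 0 i| <= \sum_j `|z 0 j| by rewrite (bigD1 i) //= lerDl sumr_ge0.
  by have := (qlarge i).2; have := ler_norm (- z 0 i); rewrite normrN; lra.
rewrite mulmxDl opprD addrA; apply: le_lt_trans (ler_normD _ _) _.
by rewrite normrN (splitr e) ltrD.
Qed.

Lemma int_dual_trivial :
  (forall l : 'rV[R]_n -> R, linear_form l ->
      (forall a, a \in A -> l a \is a Num.int) -> forall x, l x = 0) ->
  forall y : 'cV[R]_n, (forall i, (gen_mx A *m y) i 0 \is a Num.int) -> y = 0.
Proof.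
move=> forms0 y Py.
have lin : linear_form (fun x : 'rV[R]_n => (x *m y) 0 0).
  by split=> [x z|a x]; rewrite ?mulmxDl -?scalemxAl mxE.
have Ay a : a \in A -> (a *m y) 0 0 \is a Num.int.
  by move=> aA; rewrite -(gen_mx_index aA) -row_mul mxE.
apply/matrixP => j k; rewrite (ord1 k) mxE.
by have := forms0 _ lin Ay 'e_j; rewrite -rowE mxE.
Qed.

End Sufficiency.

Section Necessity.
Variable R : realType.

Lemma linear_form_bounded n (l : 'rV[R]_n -> R) : linear_form l ->
  exists2 K, 0 <= K & forall y, `|l y| <= K * `|y|.
Proof.
move=> [lD lZ]; have l0 : l 0 = 0 by rewrite -(scale0r 0) lZ mul0r.
exists (\sum_j `|l 'e_j|) => [|y]; first exact: sumr_ge0.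
rewrite {1}(row_sum_delta y) (big_morph l lD l0) mulr_suml.
apply: le_trans (ler_norm_sum _ _ _) _; apply: ler_sum => j _.
by rewrite lZ normrM mulrC ler_wpM2l // norm_coord_le.
Qed.

(* If l x <> 0, rescale x so that l takes the value 1/2 there; an element of S
   close to it has an integral l-value strictly between 0 and 1. *)
Lemma dense_int_form0 n (S : set 'rV[R]_n) (l : 'rV[R]_n -> R) :
  dense S -> linear_form l -> (forall s, S s -> l s \is a Num.int) ->
  forall x, l x = 0.
Proof.
move=> /dense_normP approx lin Sint x; apply: contrapT => lx0.
have [K K0 lK] := linear_form_bounded lin; have [lD lZ] := lin.
pose z := (2 * l x)^-1 *: x.
have lz : l z = 2^-1 by rewrite /z lZ invfM -mulrA mulVf ?mulr1 //; exact/eqP.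
have e0 : 0 < (2 * (K + 1))^-1 by rewrite invr_gt0 mulr_gt0 // ltr_wpDl.
have [s Ss zs] := approx z _ e0.
have close : `|l z - l s| < 2^-1.
  have lN v : l (- v) = - l v by rewrite -scaleN1r lZ mulN1r.
  rewrite -lN -lD.
  apply: le_lt_trans (lK _) _; apply: (@le_lt_trans _ _ (K * (2 * (K + 1))^-1)).
    by rewrite ler_wpM2l // ltW.
  by rewrite invfM mulrCA gtr_pMr ?invr_gt0 // ltr_pdivrMr ?ltr_wpDl // mul1r; lra.
have /intrP [k lsk] := Sint s Ss.
move: close; rewrite lz lsk ltr_norml => /andP[lo hi].
have k0 : 0 < k by rewrite -(ltr_int R); lra.
have : 1 <= k by [].
by rewrite -(ler_int R); lra.
Qed.

Lemma gen_semigroup_int_form n (A : seq 'rV[R]_n) (l : 'rV[R]_n -> R) :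
  linear_form l -> (forall a, a \in A -> l a \is a Num.int) ->
  forall s, gen_semigroup A s -> l s \is a Num.int.
Proof. by move=> [lD _] Aint s; elim=> [a /Aint //|a b _ Sa _ Sb]; rewrite lD rpredD. Qed.

Lemma dense_nneg_span_full n (A : seq 'rV[R]_n) :
  dense (gen_semigroup A) -> forall x, nneg_span (gen_mx A) x.
Proof.
move=> /dense_normP approx.
pose eta : R := (4 * n.+1%:R)^-1.
have eta0 : 0 < eta by rewrite invr_gt0 mulr_gt0 // ltr0n.
have [sv Ssv esv] := fin_all_exists2 (fun j : 'I_n => approx 'e_j eta eta0).
have [s Ss s1] := approx (- const_mx 1) eta eta0.
pose M := \matrix_j sv j.
have Mclose i : `|row i M - row i 1%:M| <= eta by rewrite rowK row1 distrC ltW.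
have sclose : `|- s - const_mx 1| <= eta by rewrite addrC ltW.
have [Munit [c0 c0pos c0M]] := near_one_pos_solution Mclose sclose.
apply: (nneg_span_full_of_unitmx Munit _ _ c0pos c0M).
  by move=> i; rewrite rowK; exact: gen_semigroup_nneg_span.
exact: gen_semigroup_nneg_span.
Qed.

Lemma nneg_span_full_zero_convex m n (P : 'M[R]_(m, n)) : (0 < m)%N ->
  (forall x, nneg_span P x) ->
  exists2 w : 'rV[R]_m, (forall i, 0 <= w 0 i) & \sum_i w 0 i = 1 /\ w *m P = 0.
Proof.
move=> m0 full; pose i0 := Ordinal m0.
have [c c0 cP] := full (- row i0 P).
pose w := c + 'e_i0.
have w0 i : 0 <= w 0 i by rewrite !mxE addr_ge0 ?ler0n.
have wsum : 1 <= \sum_i w 0 i.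
  rewrite (bigD1 i0) //= -[1]addr0 lerD ?sumr_ge0 //.
  by rewrite !mxE !eqxx lerDr.
have wsum0 : \sum_i w 0 i != 0 by rewrite gt_eqF //; lra.
exists ((\sum_i w 0 i)^-1 *: w) => [i|].
  by rewrite [_ 0 i]mxE mulr_ge0 // invr_ge0; lra.
split.
  under eq_bigr do rewrite [_ 0 _]mxE.
  by rewrite -mulr_sumr mulVf.
by rewrite -scalemxAl mulmxDl -cP -rowE addNr scaler0.
Qed.

(* Decompose y along +e_j and -e_j according to the signs of its coordinates. *)
Lemma nneg_span_full_bounded m n (P : 'M[R]_(m, n)) :
  (forall x, nneg_span P x) ->
  exists2 K, 0 <= K & forall y, exists2 c : 'rV[R]_m,
    (forall i, 0 <= c 0 i) & \sum_i c 0 i <= K * `|y| /\ y = c *m P.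
Proof.
move=> full.
have [p p0 pP] := fin_all_exists2 (fun j : 'I_n => full 'e_j).
have [q q0 qP] := fin_all_exists2 (fun j : 'I_n => full (- 'e_j)).
have psum0 j : 0 <= \sum_i p j 0 i by apply: sumr_ge0.
have qsum0 j : 0 <= \sum_i q j 0 i by apply: sumr_ge0.
exists (\sum_j (\sum_i p j 0 i + \sum_i q j 0 i)) => [|y].
  by apply: sumr_ge0 => j _; rewrite addr_ge0.
pose a j := (`|y 0 j| + y 0 j) / 2; pose b j := (`|y 0 j| - y 0 j) / 2.
have ab j : [/\ 0 <= a j, 0 <= b j, a j <= `|y|, b j <= `|y| & a j - b j = y 0 j].
  have := norm_coord_le y j; have : - `|y 0 j| <= y 0 j <= `|y 0 j| by rewrite -ler_norml.
  by move=> /andP[? ?] ?; rewrite /a /b; split; lra.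
exists (\sum_j (a j *: p j + b j *: q j)) => [i|].
  rewrite summxE sumr_ge0 // => j _; rewrite !mxE.
  have [? ? _ _ _] := ab j.
  by apply: addr_ge0; apply: mulr_ge0; by [|exact: p0|exact: q0].
split.
  rewrite (eq_bigr (fun i => \sum_j (a j * p j 0 i + b j * q j 0 i))) => [|i _]; last first.
    by rewrite summxE; apply: eq_bigr => j _; rewrite !mxE.
  rewrite exchange_big mulr_suml; apply: ler_sum => j _ /=.
  rewrite big_split -!mulr_sumr /= mulrDl; have [_ _ ? ? _] := ab j.
  by apply: lerD; rewrite mulrC; apply: ler_wpM2l; by [|exact: psum0|exact: qsum0].
rewrite mulmx_suml [LHS]row_sum_delta; apply: eq_bigr => j _.
rewrite mulmxDl -!scalemxAl -pP -qP scalerN -scalerBl.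
by have [_ _ _ _ ->] := ab j.
Qed.

(* For |y| < 1/(K+1), y = c P with sum c <= 1; completing c by a convex
   relation w gives a convex combination. *)
Lemma nneg_span_full_interior n (A : seq 'rV[R]_n) : (0 < size A)%N ->
  (forall x, nneg_span (gen_mx A) x) -> nbhs (0 : 'rV[R]_n) (conv_hull A).
Proof.
move=> A0 full.
have [w w0 [w1 wP]] := nneg_span_full_zero_convex A0 full.
have [K K0 bounded] := nneg_span_full_bounded full.
apply/nbhs_ballP; exists (K + 1)^-1 => [|y]; first by rewrite /= invr_gt0 ltr_wpDl.
rewrite -ball_normE /ball_ /= sub0r normrN => yK.
have {}yK : `|y| * K <= 1.
  move: yK; rewrite -[(K + 1)^-1]mul1r ltr_pdivlMr ?ltr_wpDl // mulrDr mulr1.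
  by have := normr_ge0 y; lra.
have [c c0 [csum ->]] := bounded y.
set sc := \sum_i c 0 i in csum; have sc0 : 0 <= sc by apply: sumr_ge0.
apply/conv_hullP; exists (c + (1 - sc) *: w) => [i|].
  by rewrite !mxE addr_ge0 // mulr_ge0 // subr_ge0; lra.
split; last by rewrite mulmxDl -scalemxAl wP scaler0 addr0.
under eq_bigr do rewrite mxE [X in _ + X]mxE.
by rewrite big_split /= -mulr_sumr w1 mulr1 -/sc addrC subrK.
Qed.

End Necessity.

Unset Implicit Arguments.

Theorem corollary4p4 (R : realType) (n : nat) (A : seq 'rV[R]_n) :
  @dense 'rV[R]_n (gen_semigroup A) <->
  (@interior 'rV[R]_n (conv_hull A) 0 /\
   (forall l : 'rV[R]_n -> R, linear_form l ->
      (forall a, a \in A -> l a \is a Num.int) -> forall x, l x = 0)).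
Proof.
split=> [Sdense|[hull0 forms0]].
  have [s [_ Ss]] := Sdense setT (ex_intro _ 0 I) openT.
  split; first exact: nneg_span_full_interior (gen_semigroup_size_gt0 Ss)
                                              (dense_nneg_span_full Sdense).
  by move=> l lin Aint; apply: dense_int_form0 Sdense lin (gen_semigroup_int_form lin Aint).
have [c cpos cP] := interior_conv_hull_pos_relation hull0.
have A0 := conv_hull_size_gt0 (nbhs_singleton hull0).
exact: gen_semigroup_dense A0 cpos cP (int_span_dense (int_dual_trivial forms0)).
Qed.
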